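(* There is an absolute constant $c>0$ such that for every celebrity game $\Gamma=\langle V,(w_u)_{u\in V},\alpha,\beta\rangle$ with $\beta>1$ that has a Nash equilibrium whose outcome graph is 2-edge-connected, and for every Nash equilibrium $S$ of $\Gamma$ whose outcome graph $G[S]$ is 2-edge-connected, we have $C(S)/\mathrm{opt}(\Gamma)\le c\,n/\beta$, where $n=|V|$.
   Context: A celebrity game $\Gamma=\langle V,(w_u)_{u\in V},\alpha,\beta\rangle$ consists of a set of players $V=\{1,\dots,n\}$, celebrity weights $w_u>0$, a link cost $\alpha>0$ and a critical distance $\beta$ with $1\le\beta\le n-1$. A strategy of player $u$ is a set $S_u\subseteq V\setminus\{u\}$; a strategy profile is $S=(S_1,\dots,S_n)$; its outcome graph $G[S]$ is the undirected graph on $V$ with edge set $\{\{u,v\}: u\in S_v\text{ or }v\in S_u\}$. With $d_G$ the graph distance (infinite between different connected components), the cost of player $u$ is $c_u(S)=\alpha|S_u|+\sum_{v:\,d_{G[S]}(u,v)>\beta}w_v$ and the social cost is $C(S)=\sum_{u\in V}c_u(S)$. $S$ is a Nash equilibrium if no player can strictly decrease its cost by changing only its own strategy. $\mathrm{opt}(\Gamma)=\min_S C(S)$ over all strategy profiles. *)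

From HB Require Import structures.
From mathcomp Require Import all_boot all_order all_algebra.
Set Implicit Arguments. Unset Strict Implicit. Unset Printing Implicit Defensive.
Import Order.TTheory GRing.Theory Num.Theory.
Local Open Scope ring_scope.

Definition profile (n : nat) := {ffun 'I_n -> {set 'I_n}}.

Definition valid n (S : profile n) : bool := [forall u, u \notin S u].

Definition adj n (S : profile n) : rel 'I_n :=
  fun u v => (u != v) && ((v \in S u) || (u \in S v)).

Fixpoint ball n (S : profile n) (k : nat) (u : 'I_n) : {set 'I_n} :=
  match k with
  | 0 => [set u]
  | k'.+1 => ball S k' u :|: [set v | [exists x in ball S k' u, adj S x v]]
  end.

Definition cost (R : realFieldType) n (w : 'I_n -> R) (alpha : R) (beta : nat)
  (S : profile n) (u : 'I_n) : R :=
  alpha * (#|S u|)%:R + \sum_(v | v \notin ball S beta u) w v.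

Definition social_cost (R : realFieldType) n (w : 'I_n -> R) (alpha : R) (beta : nat)
  (S : profile n) : R := \sum_u cost w alpha beta S u.

Definition deviate n (S : profile n) (u : 'I_n) (T : {set 'I_n}) : profile n :=
  [ffun v => if v == u then T else S v].

Definition nash (R : realFieldType) n (w : 'I_n -> R) (alpha : R) (beta : nat)
  (S : profile n) : Prop :=
  valid S /\ forall (u : 'I_n) (T : {set 'I_n}), u \notin T ->
    cost w alpha beta S u <= cost w alpha beta (deviate S u T) u.

Definition empty_profile n : profile n := [ffun=> set0].

Definition opt (R : realFieldType) n (w : 'I_n -> R) (alpha : R) (beta : nat) : R :=
  \big[Order.min/social_cost w alpha beta (empty_profile n)]_(S : profile n | valid S)
     social_cost w alpha beta S.

Definition connected_rel n (e : rel 'I_n) : Prop := forall u v, connect e u v.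

Definition remove_edge n (e : rel 'I_n) (a b : 'I_n) : rel 'I_n :=
  fun u v => e u v && ~~ (((u == a) && (v == b)) || ((u == b) && (v == a))).

Definition two_edge_connected n (e : rel 'I_n) : Prop :=
  connected_rel e /\ forall a b, e a b -> connected_rel (remove_edge e a b).

From HB Require Import structures.
From mathcomp Require Import all_boot all_order all_algebra.
From mathcomp Require Import zify lra.
Import Order.TTheory GRing.Theory Num.Theory.
Set Implicit Arguments. Unset Strict Implicit. Unset Printing Implicit Defensive.

(* Upper bound: fix a player u of an equilibrium S and look at the branches (components) of
   G - u. An edge bought by u leads into a branch with more than beta vertices, since otherwise
   u could drop it: by 2-edge-connectivity the branch stays reachable, and a shortest path into
   a branch of size at most beta has length at most beta. Vertices of such small branches are
   within distance beta anyway. Grouping the BFS depths in each large branch modulo beta gives,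
   for every residue i < beta, a set D_i (all roots plus all vertices of depth = i mod beta)
   covering the large branches within distance beta - 1; buying D_i costs alpha |D_i| and
   leaves nothing far, and sum_i |D_i| <= 2n. Hence beta c_u(S) <= 2 alpha n.
   Lower bound: in any profile, k isolated players force weight (k - 1) W of remoteness, the
   other n - k players need (n - k) / 2 edges, and alpha <= W because some player of S buys an
   edge; so opt >= alpha (n - 1) / 2. *)

Section Balls.
Variables (T : finType) (e : rel T).

Fixpoint rball k u : {set T} :=
  if k is k'.+1 then rball k' u :|: [set v | [exists x in rball k' u, e x v]]
  else [set u].

Lemma rball_center k u : u \in rball k u.
Proof. by elim: k => [|k IH] /=; rewrite ?set11 // in_setU IH. Qed.

Lemma rball_step k u x y : x \in rball k u -> e x y -> y \in rball k.+1 u.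
Proof.
by move=> Hx Hxy; rewrite /= in_setU inE; apply/orP; right; apply/existsP; exists x; rewrite Hx.
Qed.

Lemma rball_mono k m u : (k <= m)%N -> {subset rball k u <= rball m u}.
Proof.
move=> /subnK <-; elim: (m - k)%N => // j IH x /IH.
by rewrite addSn /= in_setU => ->.
Qed.

Lemma rball_trans a b u y z :
  y \in rball a u -> z \in rball b y -> z \in rball (a + b) u.
Proof.
move=> Hy; elim: b z => [|b IH] z /=; first by rewrite inE addn0 => /eqP ->.
rewrite in_setU addnS => /orP[/IH/(rball_mono (leqnSn _)) //|].
by rewrite inE => /existsP[x /andP[/IH Hx Hxz]]; apply: rball_step Hx Hxz.
Qed.

Lemma rball_split a b u z :
  z \in rball (a + b) u -> exists2 y, y \in rball a u & z \in rball b y.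
Proof.
elim: b z => [|b IH] z; first by rewrite addn0 => Hz; exists z; rewrite ?rball_center.
rewrite addnS /= in_setU => /orP[/IH [y Hy Hz]|].
  by exists y; rewrite // in_setU Hz.
rewrite inE => /existsP[x /andP[/IH [y Hy Hx] Hxz]].
by exists y => //; apply: rball_step Hx Hxz.
Qed.

Lemma rball_connect k u z : z \in rball k u -> connect e u z.
Proof.
elim: k z => [|k IH] z /=; first by rewrite inE => /eqP ->.
rewrite in_setU inE => /orP[/IH //|/existsP[x /andP[/IH Hx Hxz]]].
exact: connect_trans Hx (connect1 Hxz).
Qed.

Lemma path_rball u p : path e u p -> last u p \in rball (size p) u.
Proof.
elim/last_ind: p => [|p z IH]; first by rewrite rball_center.
by rewrite rcons_path last_rcons size_rcons => /andP[/IH Hp Hz]; apply: rball_step Hp Hz.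
Qed.

Lemma connect_rball u z : connect e u z -> z \in rball #|T| u.
Proof.
move=> /connectP[p Hp ->]; have [q Hq /card_uniqP Hsize _] := shortenP Hp.
apply: rball_mono (path_rball Hq).
by have := max_card (mem (u :: q)); rewrite Hsize /=; lia.
Qed.

Lemma rdist_subproof u x : exists k, (x \in rball k u) || (k == #|T|).
Proof. by exists #|T|; rewrite eqxx orbT. Qed.

(* The fallback value [#|T|] is only reached when [x] is not reachable from [u]. *)
Definition rdist u x : nat := ex_minn (rdist_subproof u x).

Lemma rdist_min k u x : x \in rball k u -> (rdist u x <= k)%N.
Proof. by move=> Hx; rewrite /rdist; case: ex_minnP => m _; apply; rewrite Hx. Qed.

Lemma rball_rdist u x : connect e u x -> x \in rball (rdist u x) u.
Proof.
by move=> /connect_rball Hx; rewrite /rdist; case: ex_minnP => m /orP[//|/eqP ->].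
Qed.

End Balls.

Lemma rball_subrel (T : finType) (e e' : rel T) k u :
  subrel e e' -> {subset rball e k u <= rball e' k u}.
Proof.
move=> ee'; elim: k => [|k IH] //= x; rewrite !in_setU !inE => /orP[/IH->//|].
by move=> /existsP[y /andP[/IH Hy /ee' Hyx]]; apply/orP; right; apply/existsP; exists y; rewrite Hy.
Qed.

Section Puncture.
Variables (T : finType) (e : rel T) (u : T).

Definition punct : rel T := fun x y => [&& e x y, x != u & y != u].

Definition component (f : rel T) x : {set T} := [set y | connect f x y].

Lemma component_connect (f : rel T) x y :
  connect_sym f -> connect f x y -> component f x = component f y.
Proof. by move=> fsym Hxy; apply/setP => z; rewrite !inE (same_connect fsym Hxy). Qed.

Lemma punct_sym : symmetric e -> symmetric punct.
Proof. by move=> esym x y; rewrite /punct esym [(x != u) && _]andbC. Qed.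

Lemma connect_punct_neq x y : connect punct x y -> x != u -> y != u.
Proof.
move=> /connectP[p Hp ->]; elim/last_ind: p Hp => [|p z _] //.
by rewrite rcons_path last_rcons => /andP[_ /and3P[_ _]].
Qed.

Lemma rball_component x :
  symmetric e -> x != u -> connect e u x -> x \in rball e #|component punct x| u.
Proof.
move=> esym xu /connectP[p Hp ->]; have [[|y q] /= Hq Huq _] := shortenP Hp.
  by rewrite rball_center.
case/andP: Hq Huq => Huy Hq /andP[uq Hyq].
have Hpunct : path punct y q.
  apply: (sub_in_path (P := [predC [:: u]])) Hq.
    by move=> a b /[!inE] au bu Hab; rewrite /punct Hab au bu.
  by apply/allP => z Hz; rewrite !inE; apply: contraNneq uq => <-.
have Hconn := path_connect Hpunct.
have Hsub : {subset y :: q <= enum (component punct (last y q))}.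
  move=> z Hz; rewrite mem_enum inE (connect_trans _ (Hconn z Hz)) //.
  by rewrite (sym_connect_sym (punct_sym esym)) Hconn ?mem_last.
rewrite cardE; apply: (rball_mono (uniq_leq_size (Hyq : uniq (y :: q)) Hsub)).
by apply: (path_rball (u := u) (p := y :: q)); rewrite /= Huy.
Qed.

Lemma rball_outside (e' : rel T) (A : {set T}) k x :
    u \notin A -> (forall y z, y \in A -> punct y z -> z \in A) ->
    subrel punct e' -> (forall z, z \notin A -> e u z -> e' u z) ->
  x \notin A -> x \in rball e k u -> x \in rball e' k u.
Proof.
move=> uA closedA punct_e' ee'u; elim: k x => [|k IH] x //= xA.
rewrite !in_setU => /orP[/(IH _ xA) -> //|]; rewrite inE => /existsP[y /andP[Hy Hyx]].
have [-> | xu] := eqVneq x u; first by rewrite rball_center.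
have yA : y \notin A.
  apply/negP => yA; have yu : y != u by apply: contraTneq yA => ->.
  by move/negP: xA; apply; apply: closedA yA _; rewrite /punct Hyx xu yu.
apply/orP; right; rewrite inE; apply/existsP; exists y; rewrite IH //=.
have [eyu | yu] := eqVneq y u; first by rewrite eyu ee'u // -eyu.
by apply: punct_e'; rewrite /punct Hyx xu yu.
Qed.

End Puncture.

Section Layers.
Variables (T : finType) (f : rel T).
Hypothesis fsym : connect_sym f.

Definition depth x := rdist f (fingraph.root f x) x.

(* Roots belong to every layer, so that vertices of depth below [b] are covered too. *)
Definition layer b i : {set T} := [set y | fingraph.roots f y || (depth y %% b == i)].

Lemma depth_ball x : x \in rball f (depth x) (fingraph.root f x).
Proof. by apply: rball_rdist; rewrite fsym connect_root. Qed.

Lemma layer_cover b i x :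
  (i < b)%N -> exists2 y, y \in layer b i & x \in rball f b.-1 y.
Proof.
move=> ib; set r := fingraph.root f x; set d := depth x.
have Hd : x \in rball f d r := depth_ball x.
have rootr : fingraph.roots f r by apply: roots_root.
have [db | bd] := ltnP d b.
  by exists r; rewrite ?inE ?rootr //; apply: rball_mono Hd; lia.
set m := ((d - i) %% b)%N; set d' := (d - m)%N.
have mb : (m < b)%N by rewrite ltn_mod; lia.
have d'i : (d' %% b = i)%N.
  have -> : d' = ((d - i) %/ b * b + i)%N by rewrite /d' /m (divn_eq (d - i) b); lia.
  by rewrite modnMDl modn_small.
have /rball_split[y Hy Hxy] : x \in rball f (d' + m) r by rewrite subnK ?leq_mod //; lia.
have rooty : fingraph.root f y = r.
  by rewrite -(eqP rootr); apply/esym/(fingraph.rootP fsym)/(rball_connect Hy).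
have depthy : depth y = d'.
  have : (d <= depth y + m)%N.
    by apply: rdist_min; rewrite -/r -rooty; apply: rball_trans (depth_ball y) Hxy.
  move=> le_d; apply/eqP; rewrite eqn_leq {1}/depth rooty rdist_min //=; lia.
by exists y; rewrite ?inE ?depthy ?d'i ?eqxx ?orbT //; apply: rball_mono Hxy; lia.
Qed.

Variables (b : nat) (A : {set T}).
Hypothesis closedA : forall x y, x \in A -> connect f x y -> y \in A.
Hypothesis bigA : forall x, x \in A -> (b < #|component f x|)%N.

Lemma card_roots_le : (b * #|[set r in A | fingraph.roots f r]| <= #|A|)%N.
Proof.
rewrite -[#|A|]sum1_card.
rewrite (partition_big (fingraph.root f) (mem [set r in A | fingraph.roots f r])) /=.
  rewrite mulnC -sum_nat_const; apply: leq_sum => r /[!inE] /andP[rA /eqP rootr].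
  rewrite sum1dep_card; apply/ltnW/(leq_trans (bigA rA))/subset_leq_card/subsetP => x.
  by rewrite !inE -{2}rootr (fingraph.root_connect fsym) => Hrx; rewrite (closedA rA Hrx) fsym.
move=> x xA; rewrite inE (roots_root fsym) andbT.
exact: closedA xA (connect_root f x).
Qed.

Lemma sum_card_layer : (\sum_(i < b) #|A :&: layer b i| <= 2 * #|A|)%N.
Proof.
apply: (@leq_trans (\sum_(y in A) (if fingraph.roots f y then b else 1))).
  rewrite (eq_bigr (fun i : 'I_b => \sum_(y in A) (y \in layer b i))); last first.
    move=> i _; rewrite -sum1_card big_mkcond [RHS]big_mkcond; apply: eq_bigr => y _.
    by rewrite in_setI; case: (y \in A); case: (y \in layer b i).
  rewrite exchange_big /=; apply: leq_sum => y yA.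
  case: ifP => rooty.
    by rewrite -[leqRHS]card_ord -sum1_card; apply: leq_sum => i _; apply: leq_b1.
  rewrite (eq_bigr (fun i : 'I_b => if depth y %% b == i then 1 else 0)); last first.
    by move=> i _; rewrite inE rooty; case: eqP.
  rewrite -big_mkcond sum1dep_card; apply/card_le1_eqP => i j /[!inE] /eqP di /eqP dj.
  by apply: val_inj; rewrite /= -di -dj.
rewrite (bigID (fingraph.roots f)) /= mul2n -addnn leq_add //.
  apply: leq_trans card_roots_le.
  rewrite mulnC -sum_nat_const big_mkcond [leqRHS]big_mkcond /=.
  by apply: leq_sum => y _; rewrite inE; case: (y \in A); case: (fingraph.roots f y).
rewrite -sum1_card big_mkcond [leqRHS]big_mkcond /=; apply: leq_sum => y _.
by case: (y \in A); case: (fingraph.roots f y).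
Qed.

End Layers.

Local Open Scope ring_scope.

Lemma ler_sum_notin (R : numDomainType) (T : finType) (w : T -> R) (B B' : {set T}) :
  (forall x, 0 <= w x) -> {subset B <= B'} ->
  \sum_(v | v \notin B') w v <= \sum_(v | v \notin B) w v.
Proof.
move=> w_ge0 BB'; rewrite big_mkcond [X in _ <= X]big_mkcond /=; apply: ler_sum => x _.
have [xB' | /(contra (@BB' x)) xB] := boolP (x \in B'); first by case: ifP.
by rewrite xB.
Qed.

Section Profiles.
Variables (n : nat) (S : profile n).

Lemma adj_sym : symmetric (adj S).
Proof. by move=> x y; rewrite /adj eq_sym orbC. Qed.

Lemma ball_rball k u : ball S k u = rball (adj S) k u.
Proof. by elim: k => //= k ->. Qed.

Lemma deviate_self u T : deviate S u T u = T.
Proof. by rewrite ffunE eqxx. Qed.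

Lemma deviate_other u T x : x != u -> deviate S u T x = S x.
Proof. by rewrite ffunE => /negPf ->. Qed.

Lemma punct_adj_deviate u T : punct (adj (deviate S u T)) u =2 punct (adj S) u.
Proof.
move=> x y; rewrite /punct /adj.
have [-> | xu] := eqVneq x u; first by rewrite !andbF.
have [-> | yu] := eqVneq y u; first by rewrite !andbF.
by rewrite !deviate_other.
Qed.

Lemma remove_edge_deviate u v :
  subrel (remove_edge (adj S) u v) (adj (deviate S u (S u :\ v))).
Proof.
move=> x y /andP[/andP[xy Hxy] Hne]; rewrite /adj xy /=.
have [exu | xu] := eqVneq x u.
  rewrite exu deviate_self deviate_other 1?eq_sym -?exu // in_setD1.
  by move: Hxy Hne; rewrite exu eqxx /=; case: (y =P v).
have [eyu | yu] := eqVneq y u.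
  rewrite eyu deviate_self deviate_other // in_setD1.
  by move: Hxy Hne; rewrite eyu eqxx /= andbT; case: (x =P v) => [->|]; rewrite ?orbT.
by rewrite !deviate_other.
Qed.

Definition large beta u : {set 'I_n} :=
  [set x | (x != u) && (beta < #|component (punct (adj S) u) x|)%N].

Lemma large_closed beta u x y :
  x \in large beta u -> connect (punct (adj S) u) x y -> y \in large beta u.
Proof.
rewrite !inE => /andP[xu Hx] Hxy.
rewrite (connect_punct_neq Hxy xu) -(component_connect _ Hxy) ?Hx //.
exact/sym_connect_sym/punct_sym/adj_sym.
Qed.

Lemma ball_small beta u x :
  connected_rel (adj S) -> x \notin large beta u -> x \in ball S beta u.
Proof.
rewrite ball_rball inE negb_and negbK -leqNgt => Sconn.
have [-> _ | xu /= small] := eqVneq x u; first exact: rball_center.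
apply: (rball_mono small); exact: rball_component adj_sym xu (Sconn u x).
Qed.

End Profiles.

Section Equilibria.
Variables (R : realFieldType) (n : nat) (w : 'I_n -> R) (alpha : R) (beta : nat).
Hypotheses (w_ge0 : forall x, 0 <= w x) (alpha_gt0 : 0 < alpha).
Variable S : profile n.
Hypotheses (S_nash : nash w alpha beta S) (S_2ec : two_edge_connected (adj S)).

Lemma punct_adj_connect_sym u : connect_sym (punct (adj S) u).
Proof. exact/sym_connect_sym/punct_sym/adj_sym. Qed.

(* Otherwise [u] could drop the edge to [v]: by 2-edge-connectivity the small branch of [v]
   stays reachable, hence within distance [beta]. *)
Lemma bought_edge_large u v : v \in S u -> v \in large S beta u.
Proof.
case: S_nash S_2ec => valS Snash [_ S2ec] vS.
have vu : v != u by apply: contraTneq vS => ->; apply: (forallP valS).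
rewrite inE vu ltnNge /=; apply/negP => small.
set f := punct (adj S) u; set S' := deviate S u (S u :\ v).
have uT : u \notin S u :\ v by rewrite in_setD1 (negPf (forallP valS u)) andbF.
have ball_sub : {subset ball S beta u <= ball S' beta u}.
  move=> x; rewrite !ball_rball => Hx.
  have [xv | xv] := boolP (x \in component f v); rewrite inE in xv.
    have xu : x != u by apply: connect_punct_neq xv vu.
    have Hcon : connect (adj S') u x.
      apply: connect_sub (S2ec u v _ u x) => [a b /remove_edge_deviate|]; first exact: connect1.
      by rewrite /adj eq_sym vu vS.
    apply: rball_mono (rball_component (adj_sym S') xu Hcon).
    suff -> : component (punct (adj S') u) x = component f v by [].
    rewrite (component_connect (punct_adj_connect_sym u) xv).
    by apply/setP => z; rewrite !inE (eq_connect (punct_adj_deviate S u _)).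
  apply: (rball_outside (A := component f v)) Hx; rewrite ?inE //.
  - by apply/negP => /connect_punct_neq /(_ vu); rewrite eqxx.
  - by move=> y z; rewrite !inE => Hy Hyz; apply: connect_trans Hy (connect1 Hyz).
  - by move=> a b; rewrite -(punct_adj_deviate S u (S u :\ v)) => /and3P[].
  - move=> z; rewrite inE => zv /andP[uz Huz]; rewrite /adj uz deviate_self in_setD1.
    have -> : z != v by apply: contraNneq zv => ->; apply: connect0.
    by rewrite deviate_other // eq_sym.
have := Snash u _ uT; rewrite /cost deviate_self -/S' (cardsD1 v) vS natrD mulrDr mulr1.
have := ler_sum_notin w_ge0 ball_sub; move: alpha_gt0; lra.
Qed.

Lemma ball_deviate_layer u (i : 'I_beta) x :
  x \in ball (deviate S u (large S beta u :&: layer (punct (adj S) u) beta i)) beta u.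
Proof.
set f := punct (adj S) u; set D := _ :&: _; set S' := deviate S u D.
have f_adj' : subrel f (adj S') by move=> a b; rewrite /f -(punct_adj_deviate S u D) => /and3P[].
rewrite ball_rball; have [-> | xu] := eqVneq x u; first exact: rball_center.
have [xL | xS] := boolP (x \in large S beta u).
  have [y yi Hxy] := layer_cover (punct_adj_connect_sym u) x (ltn_ord i).
  have yD : y \in D.
    rewrite in_setI yi andbT; apply: large_closed xL _.
    by rewrite punct_adj_connect_sym; apply: rball_connect Hxy.
  have Hy : y \in rball (adj S') 1 u.
    apply: (rball_step (rball_center _ 0 u)); rewrite /adj deviate_self yD andbT.
    by move: yD; rewrite !inE eq_sym => /andP[/andP[]].
  have := rball_trans Hy (rball_subrel f_adj' Hxy).
  by rewrite add1n prednK // (leq_ltn_trans _ (ltn_ord i)).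
have Hx : x \in rball (adj S) beta u by rewrite -ball_rball; apply: ball_small xS; case: S_2ec.
apply: (rball_outside (A := large S beta u)) xS Hx.
- by rewrite inE eqxx.
- by move=> y z yL /connect1; apply: large_closed.
- exact: f_adj'.
- move=> z zS /andP[uz /orP[/bought_edge_large zL | uSz]]; first by rewrite zL in zS.
  by rewrite /adj uz /S' (@deviate_other _ S u D z) 1?eq_sym // uSz orbT.
Qed.

Lemma cost_le_layer u (i : 'I_beta) :
  cost w alpha beta S u <= alpha * #|large S beta u :&: layer (punct (adj S) u) beta i|%:R.
Proof.
have uD : u \notin large S beta u :&: layer (punct (adj S) u) beta i by rewrite !inE eqxx.
apply: le_trans (S_nash.2 u _ uD) _; rewrite /cost deviate_self big_pred0 ?addr0 //.
by move=> x; rewrite ball_deviate_layer.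
Qed.

Lemma beta_cost_le u : beta%:R * cost w alpha beta S u <= alpha * (2 * n)%:R.
Proof.
rewrite mulr_natl -[X in _ *+ X](card_ord beta) -sumr_const.
apply: le_trans (ler_sum _ (fun i _ => cost_le_layer u i)) _.
rewrite -mulr_sumr -natr_sum; apply: ler_wpM2l; first exact: ltW.
rewrite ler_nat.
apply: leq_trans (sum_card_layer (punct_adj_connect_sym u) _ _) _.
- by move=> x y; apply: large_closed.
- by move=> x; rewrite inE => /andP[].
- by rewrite leq_mul2l (leq_trans (max_card _)) ?card_ord.
Qed.

End Equilibria.

Definition isolated n (P : profile n) x := [forall y, ~~ adj P x y].

Section LowerBound.
Variables (R : realFieldType) (n : nat) (w : 'I_n -> R) (alpha : R) (beta : nat).
Hypothesis w_ge0 : forall x, 0 <= w x.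
Variable P : profile n.

Lemma ball_isolated k v : isolated P v -> ball P k v = [set v].
Proof.
move=> /forallP iso_v; elim: k => //= k ->; apply/setP => y; rewrite in_setU !inE.
case: (y == v) => //=; apply/negbTE/existsP => -[x /andP[/set1P -> vy]].
by move: (iso_v y); rewrite vy.
Qed.

Lemma card_nonisolated : (#|[set x | ~~ isolated P x]| <= 2 * \sum_x #|P x|)%N.
Proof.
have in_card : \sum_y #|P y| = \sum_x #|[set y | x \in P y]|.
  under eq_bigr do rewrite -sum1_card.
  by rewrite (exchange_big_dep xpredT) //=; apply: eq_bigr => x _; rewrite sum1dep_card.
rewrite mul2n -addnn {2}in_card -big_split -sum1dep_card big_mkcond /=.
apply: leq_sum => x _; case: ifP => // /forallPn[y]; rewrite negbK => /andP[_ /orP[yPx | xPy]].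
  by apply: leq_trans (leq_addr _ _); rewrite card_gt0; apply/set0Pn; exists y.
by apply: leq_trans (leq_addl _ _); rewrite card_gt0; apply/set0Pn; exists y; rewrite inE.
Qed.

Lemma far_cost_isolated :
  (\sum_x w x) * (#|[set x | isolated P x]|%:R - 1) <=
  \sum_v \sum_(u | u \notin ball P beta v) w u.
Proof.
set I := [set x | isolated P x].
have far_iso v : v \in I -> \sum_(u | u \notin ball P beta v) w u = \sum_x w x - w v.
  rewrite inE => /ball_isolated ->; rewrite [in RHS](bigD1 v) //=.
  by rewrite addrAC subrr add0r; apply: eq_bigl => u; rewrite inE.
rewrite [leRHS](bigID (mem I)) /= -[leLHS]addr0; apply: lerD.
  rewrite (eq_bigr _ far_iso) sumrB sumr_const mulrBr mulr1 mulr_natr; apply: lerB => //.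
  by rewrite [leRHS](bigID (mem I)) lerDl sumr_ge0.
by apply: sumr_ge0 => v _; apply: sumr_ge0.
Qed.

Lemma social_cost_ge :
  0 < alpha -> alpha <= \sum_x w x -> alpha * (n%:R - 1) <= 2 * social_cost w alpha beta P.
Proof.
move=> alpha_gt0 alpha_le.
set k := #|[set x | isolated P x]|.
set E := (\sum_x #|P x|)%N.
set F := \sum_v \sum_(u | u \notin ball P beta v) w u.
have -> : social_cost w alpha beta P = alpha * E%:R + F.
  by rewrite /social_cost /cost big_split /= natr_sum mulr_sumr.
have card_n : (k + #|[set x | ~~ isolated P x]|)%N = n.
  rewrite -[RHS](card_ord n) -(cardsC [set x | isolated P x]); congr (_ + _)%N.
  by apply: eq_card => x; rewrite !inE.
have edges : alpha * (n%:R - k%:R) <= 2 * (alpha * E%:R).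
  rewrite -card_n natrD addrAC subrr add0r mulrCA -natrM.
  by apply: ler_wpM2l; [exact: ltW | rewrite ler_nat; exact: card_nonisolated].
have F_ge0 : 0 <= F by apply: sumr_ge0 => v _; apply: sumr_ge0.
have far : alpha * (k%:R - 1) <= F.
  have [-> | k_gt0] := posnP k; first by rewrite sub0r mulrN1; lra.
  apply: le_trans (far_cost_isolated); apply: ler_wpM2r; last by [].
  by rewrite subr_ge0 ler1n.
lra.
Qed.

End LowerBound.

Lemma alpha_le_weight (R : realFieldType) n (w : 'I_n -> R) alpha beta (S : profile n) :
  (forall x, 0 <= w x) -> 0 <= alpha -> (1 < n)%N ->
  nash w alpha beta S -> connected_rel (adj S) -> alpha <= \sum_x w x.
Proof.
move=> w_ge0 alpha_ge0 n_gt1 [_ Snash] Sconn.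
have [x Sx] : exists x, S x != set0.
  have /connectP[[|y p] /= Hp Hb] := Sconn (Ordinal (ltnW n_gt1)) (Ordinal n_gt1).
    by move/(congr1 val): Hb.
  case/andP: Hp => /andP[_ /orP[yS | aS]] _; first by eexists; apply/set0Pn; exists y; exact: yS.
  by exists y; apply/set0Pn; eexists; exact: aS.
have := Snash x set0 (negbT (in_set0 x)); rewrite /cost deviate_self cards0 mulr0 add0r.
have far_le : \sum_(v | v \notin ball (deviate S x set0) beta x) w v <= \sum_v w v.
  by rewrite [leRHS](bigID (fun v => v \notin ball (deviate S x set0) beta x)) /= lerDl sumr_ge0.
have far_ge0 : 0 <= \sum_(v | v \notin ball S beta x) w v by apply: sumr_ge0.
have : 1 <= #|S x|%:R :> R by rewrite ler1n card_gt0.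
nra.
Qed.

Lemma opt_ge (R : realFieldType) n (w : 'I_n -> R) alpha beta :
  (forall x, 0 <= w x) -> 0 < alpha -> alpha <= \sum_x w x ->
  alpha * (n%:R - 1) <= 2 * opt w alpha beta.
Proof.
move=> w_ge0 alpha_gt0 alpha_le; rewrite /opt.
apply: (big_ind (fun c => alpha * (n%:R - 1) <= 2 * c)).
- exact: social_cost_ge.
- by move=> a b Ha Hb; rewrite /Order.min; case: ifP.
- by move=> P _; apply: social_cost_ge.
Qed.

Theorem proposition8 (R : realFieldType) :
  exists c : R, 0 < c /\
  forall (n : nat) (w : 'I_n -> R) (alpha : R) (beta : nat),
    (forall u, 0 < w u) -> 0 < alpha ->
    (1 <= beta)%N -> (beta <= n.-1)%N -> (1 < beta)%N ->
    (exists S0 : profile n, nash w alpha beta S0 /\ two_edge_connected (adj S0)) ->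
    forall S : profile n, nash w alpha beta S -> two_edge_connected (adj S) ->
      social_cost w alpha beta S / opt w alpha beta <= c * n%:R / beta%:R.
Proof.
exists 6; split => // n w alpha beta w_gt0 alpha_gt0 _ beta_le beta_gt1 _ S S_nash S_2ec.
have n_gt2 : (2 < n)%N by lia.
have w_ge0 x : 0 <= w x := ltW (w_gt0 x).
have alpha_le := alpha_le_weight w_ge0 (ltW alpha_gt0) (ltnW n_gt2) S_nash S_2ec.1.
have opt_lb := opt_ge beta w_ge0 alpha_gt0 alpha_le.
have cost_ub : beta%:R * social_cost w alpha beta S <= n%:R * (alpha * (2 * n)%:R).
  rewrite /social_cost mulr_sumr.
  apply: le_trans (ler_sum _ (fun u _ => beta_cost_le w_ge0 alpha_gt0 S_nash S_2ec u)) _.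
  by rewrite sumr_const card_ord mulr_natl.
have n_ge3 : 3 <= n%:R :> R by rewrite (ler_nat R 3 n).
have beta_gt0 : 0 < beta%:R :> R by rewrite ltr0n; lia.
have opt_gt0 : 0 < opt w alpha beta by nra.
rewrite ler_pdivrMr // mulrAC ler_pdivlMr // natrM in cost_ub *.
nra.
Qed.
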